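(* Let $f_1,\ldots,f_k\in\mathbb{R}[X_1,\ldots,X_n]$ with $\deg f_i<d$ for all $i$, and suppose that the origin is not a solution of the system $f_1\ge 0,\ldots,f_k\ge 0$ and that its solution set in $\mathbb{R}^n$ is bounded. Let $D$ be the minimal even integer not less than $kd+1$ and $$g(\varepsilon)=\prod_{1\le i\le k}(f_i+\varepsilon)-\varepsilon^{k+1}\sum_{1\le j\le n}X_j^{D}.$$ Then for all sufficiently small positive values of $\varepsilon$: if the system $f_1\ge 0,\ldots,f_k\ge 0$ has a real solution, then the system of equations $\frac{\partial g(\varepsilon)}{\partial X_1}=\cdots=\frac{\partial g(\varepsilon)}{\partial X_n}=0$ has only finitely many roots in $\mathbb{C}^n$. *)

From HB Require Import structures.
From mathcomp Require Import all_boot all_order all_algebra.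
From mathcomp Require Import reals.
From mathcomp Require Import complex.
From mathcomp Require Import mpoly.

Set Implicit Arguments.
Unset Strict Implicit.
Unset Printing Implicit Defensive.

Import Order.TTheory GRing.Theory Num.Theory.
Local Open Scope ring_scope.

Definition minEvenGe (m : nat) : nat := if odd m then m.+1 else m.
Definition Dexp (k d : nat) : nat := minEvenGe (k * d).+1.

Definition gpoly (R : realType) (n k d : nat) (f : 'I_k -> {mpoly R[n]})
    (eps : R) : {mpoly R[n]} :=
  \prod_(i < k) (f i + eps%:MP)
  - (eps ^+ k.+1) *: \sum_(j < n) ('X_j) ^+ (Dexp k d).

Definition semialg_sol (R : realType) (n k : nat) (f : 'I_k -> {mpoly R[n]})
    (x : 'I_n -> R) : Prop :=
  forall i, 0 <= (f i).@[x].

Definition cpoly (R : realType) (n : nat) (p : {mpoly R[n]})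
  : {mpoly (complex R)[n]} := map_mpoly (fun r : R => Complex r 0) p.

Definition crit_root (R : realType) (n : nat) (p : {mpoly R[n]})
    (z : {ffun 'I_n -> complex R}) : Prop :=
  forall j : 'I_n, (cpoly (mderiv j p)).@[z] = 0.

Definition finitely_many (T : eqType) (P : T -> Prop) : Prop :=
  exists s : seq T, forall z, P z -> z \in s.

From HB Require Import structures.
From mathcomp Require Import all_boot all_order all_algebra.
From mathcomp Require Import reals complex mpoly zify.

(* For every eps > 0, prod_i (f_i + eps) has degree at most
   k(d-1) < D-1, hence dg/dX_j = - D eps^(k+1) X_j^(D-1) + (terms of degree
   < D-1).  At a complex critical point each z_j^(D-1) is thus the value of a
   polynomial of degree < D-1.  Lowering exponents with these relations, every
   polynomial function on the critical set is a linear combination of the N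
   monomials with all exponents < D-1.  So 1, z_j, ..., z_j^N are linearly
   dependent there: z_j is a root of a fixed nonzero univariate polynomial,
   and each coordinate, hence the critical set, takes finitely many values. *)

Set Implicit Arguments.
Unset Strict Implicit.
Unset Printing Implicit Defensive.

Import Order.TTheory GRing.Theory Num.Theory.
Local Open Scope ring_scope.

Section SpannedOn.
Variables (F : pzRingType) (X : Type) (I : finType).
Variables (Z : X -> Prop) (B : I -> X -> F).

Definition spanned_on (g : X -> F) : Prop :=
  exists c : I -> F, forall x, Z x -> g x = \sum_i c i * B i x.

Lemma spanned_on_eq g1 g2 :
  (forall x, Z x -> g1 x = g2 x) -> spanned_on g2 -> spanned_on g1.
Proof. by move=> g12 [c g2E]; exists c => x Zx; rewrite g12 ?g2E. Qed.

Lemma spanned_on_basis i : spanned_on (B i).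
Proof.
exists (fun i' => (i' == i)%:R) => x _.
by rewrite (bigD1 i) //= eqxx mul1r big1 ?addr0 // => i' /negbTE->; rewrite mul0r.
Qed.

Lemma spanned_onMl a g : spanned_on g -> spanned_on (fun x => a * g x).
Proof.
move=> [c gE]; exists (fun i => a * c i) => x Zx.
by rewrite gE // mulr_sumr; apply: eq_bigr => i _; rewrite mulrA.
Qed.

Lemma spanned_on_sum (J : eqType) (r : seq J) (G : J -> X -> F) :
  (forall j, j \in r -> spanned_on (G j)) ->
  spanned_on (fun x => \sum_(j <- r) G j x).
Proof.
elim: r => [_|j r IHr spanG].
  by exists (fun=> 0) => x _; rewrite big_nil big1 // => i _; rewrite mul0r.
have [c1 G1E] := spanG j (mem_head j r).
have [c2 G2E] := IHr (fun j' r_j' => spanG j' (mem_behead (s := j :: r) r_j')).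
exists (fun i => c1 i + c2 i) => x Zx.
rewrite big_cons G1E // G2E // -big_split.
by apply: eq_bigr => i _; rewrite mulrDl.
Qed.

End SpannedOn.

Lemma exists_left_kernel_vector (F : fieldType) m n (A : 'M[F]_(m, n)) :
  (n < m)%N -> exists2 v : 'rV_m, v != 0 & v *m A = 0.
Proof.
move=> lt_nm; have /rowV0Pn[v /sub_kermxP vA0 nz_v] : kermx A != 0.
  by rewrite kermx_eq0 /row_free ltn_eqF // (leq_ltn_trans (rank_leq_col A)).
by exists v.
Qed.

Section Annihilator.
Variables (F : fieldType) (X : Type) (I : finType).
Variables (Z : X -> Prop) (B : I -> X -> F).

(* The #|I|.+1 powers 1, h, ..., h ^+ #|I| live in a space of dimension #|I|. *)
Lemma annihilating_poly (h : X -> F) :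
  (forall t, spanned_on Z B (fun x => h x ^+ t)) ->
  exists2 q : {poly F}, q != 0 & forall x, Z x -> root q (h x).
Proof.
move=> span_h; set N := #|I|.
have /fin_all_exists[c hE] : forall t : 'I_N.+1, exists c : I -> F,
    forall x, Z x -> h x ^+ t = \sum_i c i * B i x by move=> t; apply: span_h.
pose A := \matrix_(t < N.+1, s < N) c t (enum_val s).
have [u nz_u uA0] := exists_left_kernel_vector A (ltnSn N).
exists (\poly_(t < N.+1) u 0 (inord t)).
  apply: contra nz_u => /eqP q0; apply/eqP/rowP => t.
  have := congr1 (coefp t) q0.
  by rewrite /= coef_poly ltn_ord inord_val coef0 mxE.
move=> x Zx; rewrite /root horner_poly.
have kerA i : \sum_(t < N.+1) u 0 t * c t i = 0.
  transitivity ((u *m A) 0 (enum_rank i)); last by rewrite uA0 mxE.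
  by rewrite mxE; apply: eq_bigr => t _; rewrite mxE enum_rankK.
under eq_bigr => t _ do rewrite inord_val hE // mulr_sumr.
rewrite exchange_big big1 //= => i _.
by under eq_bigr do rewrite mulrA; rewrite -mulr_suml kerA mul0r.
Qed.

End Annihilator.

Lemma finite_roots (F : closedFieldType) (q : {poly F}) :
  q != 0 -> exists s : seq F, forall x, root q x -> x \in s.
Proof.
move=> nz_q; have [s qE] := closed_field_poly_normal q.
by exists s => x; rewrite qE rootZ ?lead_coef_eq0 // root_prod_XsubC.
Qed.

Lemma finitely_many_ffun (I : finType) (F : choiceType)
    (P : {ffun I -> F} -> Prop) :
  (forall i, exists s : seq F, forall z, P z -> z i \in s) -> finitely_many P.
Proof.
move=> /fin_all_exists[s Ps]; set S := flatten [seq s i | i <- enum I].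
have PS z i : P z -> z i \in S.
  by move=> Pz; apply/flattenP; exists (s i); rewrite ?Ps ?map_f ?mem_enum.
exists (codom (fun g : {ffun I -> seq_sub S} => [ffun i => val (g i)])) => z Pz.
pose g : {ffun I -> seq_sub S} := [ffun i => SeqSub (PS z i Pz)].
have -> : z = [ffun i => val (g i)] by apply/ffunP => i; rewrite !ffunE.
exact: codom_f.
Qed.

Section PowerReduction.
Variables (F : comNzRingType) (n m : nat) (Z : {ffun 'I_n -> F} -> Prop).

Definition small_mnm (t : {ffun 'I_n -> 'I_m}) : 'X_{1..n} :=
  [multinom (t i : nat) | i < n].

Definition small_monomial (t : {ffun 'I_n -> 'I_m}) (z : {ffun 'I_n -> F}) : F :=
  ('X_[small_mnm t]).@[z].

Lemma spanned_on_small_monomial (mu : 'X_{1..n}) :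
  (forall i, mu i < m)%N -> spanned_on Z small_monomial (fun z => ('X_[mu]).@[z]).
Proof.
move=> mu_lt; pose t := [ffun i => Ordinal (mu_lt i)].
apply: spanned_on_eq (spanned_on_basis Z small_monomial t) => z _.
rewrite /small_monomial; suff -> : small_mnm t = mu by [].
by apply/mnmP => i; rewrite mnmE ffunE.
Qed.

Hypothesis power_reduces : forall j : 'I_n,
  exists2 p : {mpoly F[n]}, (msize p <= m)%N & forall z, Z z -> z j ^+ m = p.@[z].

Lemma monomial_reduces (mu : 'X_{1..n}) (j : 'I_n) : (m <= mu j)%N ->
  exists2 q : {mpoly F[n]}, (msize q <= mdeg mu)%N &
    forall z, Z z -> ('X_[mu]).@[z] = q.@[z].
Proof.
move=> le_m_mu; have [p size_p pE] := power_reduces j.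
set nu := (mu - U_(j) *+ m)%MM.
have muE : mu = (nu + U_(j) *+ m)%MM.
  rewrite submK //; apply/mnm_lepP => i; rewrite mulmnE mnm1E.
  by case: eqP => [<-|_]; rewrite ?mul1n ?mul0n.
exists ('X_[nu] * p); last first.
  by move=> z Zz; rewrite muE mpolyXD -mpolyXn !mevalM rmorphXn /= mevalXU pE.
have [->|nz_p] := eqVneq p 0; first by rewrite mulr0 msize0.
rewrite msizeM_proper; last by rewrite mleadXm mcoeffX eqxx mul1r mleadc_eq0.
by rewrite msizeX muE mdegD mdegMn mdeg1 mul1n; lia.
Qed.

Lemma spanned_on_meval (p : {mpoly F[n]}) :
  spanned_on Z small_monomial (fun z => p.@[z]).
Proof.
move: (ltnSn (msize p)); elim: (msize p).+1 {-2}p => // K IHK {}p size_p.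
suff: spanned_on Z small_monomial
    (fun z => \sum_(mu <- msupp p) p@_mu * ('X_[mu]).@[z]).
  apply: spanned_on_eq => z _.
  by rewrite {1}(mpolyE p) raddf_sum; apply: eq_bigr => mu _; rewrite /= mevalZ.
apply: spanned_on_sum => mu mu_p; apply: spanned_onMl.
have [small_mu|] := boolP [forall i, mu i < m]%N.
  by apply: spanned_on_small_monomial => i; apply: (forallP small_mu).
rewrite negb_forall => /existsP[j]; rewrite -leqNgt.
move=> /monomial_reduces[q size_q qE].
apply: spanned_on_eq qE _; apply: IHK.
by rewrite (leq_ltn_trans size_q) // (leq_trans (msize_mdeg_lt mu_p)).
Qed.

End PowerReduction.

Lemma finitely_many_of_power_reduction (F : closedFieldType) (n m : nat)
    (Z : {ffun 'I_n -> F} -> Prop) :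
  (forall j : 'I_n, exists2 p : {mpoly F[n]}, (msize p <= m)%N &
     forall z, Z z -> z j ^+ m = p.@[z]) ->
  finitely_many Z.
Proof.
move=> power_reduces; apply: finitely_many_ffun => j.
have [|q nz_q qZ] :=
    @annihilating_poly _ _ _ Z (@small_monomial _ n m) (fun z => z j).
  move=> t; apply: spanned_on_eq (spanned_on_meval power_reduces ('X_j ^+ t)).
  by move=> z _; rewrite rmorphXn /= mevalXU.
have [s qs] := finite_roots nz_q.
by exists s => z Zz; apply/qs/qZ.
Qed.

Lemma msize_mderiv (R : nzRingType) n (i : 'I_n) (p : {mpoly R[n]}) :
  (msize (mderiv i p) <= (msize p).-1)%N.
Proof.
rewrite [msize (mderiv i p)]msizeE; apply/bigmax_leqP_seq => mu mu_dp _.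
have /msize_mdeg_lt : (mu + U_(i))%MM \in msupp p.
  move: mu_dp; rewrite !mcoeff_msupp mcoeff_mderiv.
  by apply: contra => /eqP->; rewrite mul0rn.
by rewrite mdegD mdeg1; lia.
Qed.

Lemma msize_prod_le (R : idomainType) n k (p : 'I_k -> {mpoly R[n]}) e :
  (forall i, msize (p i) <= e.+1)%N -> (msize (\prod_i p i) <= (k * e).+1)%N.
Proof.
elim: k p => [|k IHk] p size_p; first by rewrite big_ord0 msize1.
rewrite big_ord_recr /=; set q := \prod_(i < k) _.
have size_q : (msize q <= (k * e).+1)%N by apply: IHk => i; apply: size_p.
have [->|nz_q] := eqVneq q 0; first by rewrite mul0r msize0.
have [->|nz_pk] := eqVneq (p ord_max) 0; first by rewrite mulr0 msize0.
by rewrite msizeM // mulSn; have := size_p ord_max; lia.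
Qed.

Lemma msize_map_mpoly (R S : nzRingType) n (f : {rmorphism R -> S})
    (p : {mpoly R[n]}) :
  injective f -> msize (map_mpoly f p) = msize p.
Proof.
by move=> inj_f; rewrite !msizeE (perm_big _ (msupp_map_mpoly _ inj_f)).
Qed.

Lemma mderiv_sumXn (R : nzRingType) n (i : 'I_n) e :
  mderiv i (\sum_(j < n) 'X_j ^+ e : {mpoly R[n]}) = 'X_i ^+ e.-1 *+ e.
Proof.
rewrite raddf_sum (bigD1 i) //= big1 ?addr0 => [|j /negbTE neq_ji].
  rewrite mpolyXn mderivX mulmnE mnm1E eqxx mul1n scaler_nat mpolyXn.
  congr ('X_[_] *+ _); apply/mnmP => l.
  by rewrite mnmBE !mulmnE mnm1E; case: eqP; lia.
by rewrite mpolyXn mderivX mulmnE mnm1E neq_ji mul0n scale0r.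
Qed.

Lemma leq_Dexp k d : ((k * d).+1 <= Dexp k d)%N.
Proof. by rewrite /Dexp /minEvenGe; case: ifP. Qed.

Lemma cpoly_real_complex (R : realType) n (p : {mpoly R[n]}) :
  cpoly p = map_mpoly (real_complex R) p.
Proof. by []. Qed.

Section CriticalPoints.
Variables (R : realType) (n k d : nat) (f : 'I_k -> {mpoly R[n]}) (eps : R).
Hypothesis size_f : forall i, (msize (f i) <= d)%N.

Lemma mderiv_gpoly (j : 'I_n) :
  mderiv j (gpoly d f eps) =
  mderiv j (\prod_i (f i + eps%:MP))
  - (eps ^+ k.+1 *+ Dexp k d) *: 'X_j ^+ (Dexp k d).-1.
Proof. by rewrite /gpoly mderivB mderivZ mderiv_sumXn -scalerMnr scalerMnl. Qed.

Lemma msize_mderiv_prod (j : 'I_n) :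
  (msize (mderiv j (\prod_i (f i + eps%:MP))) <= (Dexp k d).-1)%N.
Proof.
have size_prod : (msize (\prod_i (f i + eps%:MP)) <= (k * d.-1).+1)%N.
  apply: msize_prod_le => i; rewrite (leq_trans (msizeD_le _ _)) // msizeC.
  by rewrite geq_max (leq_trans (size_f i)) ?leqSpred // (leq_trans (leq_b1 _)).
have le_kd : (k * d.-1 <= k * d)%N by rewrite leq_mul // leq_pred.
have := leq_Dexp k d; have := msize_mderiv j (\prod_i (f i + eps%:MP)); lia.
Qed.

Hypothesis eps_gt0 : 0 < eps.

Lemma crit_root_power_reduces (j : 'I_n) :
  exists2 p : {mpoly R[i][n]}, (msize p <= (Dexp k d).-1)%N &
    forall z, crit_root (gpoly d f eps) z -> z j ^+ (Dexp k d).-1 = p.@[z].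
Proof.
set h := mderiv j (\prod_i (f i + eps%:MP)).
set c := real_complex R (eps ^+ k.+1 *+ Dexp k d).
have nz_c : c != 0.
  rewrite fmorph_eq0 gt_eqF // pmulrn_lgt0 ?exprn_gt0 //.
  exact: leq_trans (leq_Dexp k d).
exists (c^-1 *: cpoly h).
  rewrite (leq_trans (msizeZ_le _ _)) // cpoly_real_complex.
  by rewrite msize_map_mpoly ?msize_mderiv_prod // => x y [].
move=> z /(_ j); rewrite mderiv_gpoly !cpoly_real_complex rmorphB /= map_mpolyZ.
rewrite rmorphXn /= map_mpolyX mevalB mevalZ rmorphXn /= mevalXU -/h -/c.
by move=> /eqP; rewrite subr_eq0 mevalZ => /eqP->; rewrite mulKf.
Qed.

End CriticalPoints.

Theorem lemma5p3 (R : realType) (n k d : nat) (f : 'I_k -> {mpoly R[n]})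
  (hdeg : forall i, (msize (f i) <= d)%N)
  (horig : ~ semialg_sol f (fun _ => 0))
  (hbdd : exists M : R, forall x : 'I_n -> R,
      semialg_sol f x -> forall j, `|x j| <= M) :
  exists eps0 : R, 0 < eps0 /\
    forall eps : R, 0 < eps -> eps < eps0 ->
      (exists x : 'I_n -> R, semialg_sol f x) ->
      finitely_many (crit_root (gpoly d f eps)).
Proof.
exists 1; split=> // eps eps_gt0 _ _.
apply: finitely_many_of_power_reduction => j.
exact: crit_root_power_reduces.
Qed.
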